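(* For every $n\ge 1$ and every integer $k$ with $1\le k\le n$, every set $S=R\cup B$ of points in the plane in general position (no three collinear), colored red ($R$) and blue ($B$), with $|R|=|B|=n$, contains a balanced $2k$-hole.
   Context: A hole of $S$ is a simple polygon whose vertices are points of $S$ and whose interior contains no point of $S$ (not necessarily convex); a $2k$-hole has $2k$ vertices, and it is balanced if exactly $k$ of its vertices are red and $k$ are blue. *)

From mathcomp Require Import all_boot all_order all_algebra.
Set Implicit Arguments. Unset Strict Implicit. Unset Printing Implicit Defensive.
Import Order.TTheory GRing.Theory Num.Theory.
Local Open Scope ring_scope.

Section Geometry.
Variable R : realFieldType.
Definition point := (R * R)%type.

Definition det3 (a b c : point) : R :=
  (b.1 - a.1) * (c.2 - a.2) - (b.2 - a.2) * (c.1 - a.1).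

Definition collinear (a b c : point) : Prop := det3 a b c = 0.

Definition general_position (S : seq point) : Prop :=
  forall a b c, a \in S -> b \in S -> c \in S ->
    a != b -> b != c -> a != c -> ~ collinear a b c.

Definition on_segment (x a b : point) : Prop :=
  exists2 t : R, 0 <= t <= 1 &
    x = (a.1 + t * (b.1 - a.1), a.2 + t * (b.2 - a.2)).

Definition vtx (P : seq point) (i : nat) : point :=
  nth (0, 0) P (i %% size P).

(* A 2-gon (degenerate polygon, a segment)
   is accepted as the degenerate case of a "2-hole". *)
Definition simple_polygon (P : seq point) : Prop :=
  uniq P /\
  (size P = 2%N \/
   ((3 <= size P)%N /\
    forall i j, (i < size P)%N -> (j < size P)%N -> i != j ->
      if j == (i.+1 %% size P)%N then
        (forall x, on_segment x (vtx P i) (vtx P i.+1) ->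
                   on_segment x (vtx P j) (vtx P j.+1) -> x = vtx P j)
      else if i == (j.+1 %% size P)%N then
        (forall x, on_segment x (vtx P i) (vtx P i.+1) ->
                   on_segment x (vtx P j) (vtx P j.+1) -> x = vtx P i)
      else
        (forall x, on_segment x (vtx P i) (vtx P i.+1) ->
                   ~ on_segment x (vtx P j) (vtx P j.+1)))).

(* the edge [a,b] crosses the horizontal ray going right from q
   (half-open convention on the y-coordinates) *)
Definition crosses_ray (q a b : point) : bool :=
  ((a.2 > q.2) != (b.2 > q.2)) &&
  (q.1 < a.1 + (q.2 - a.2) * (b.1 - a.1) / (b.2 - a.2)).

(* q lies in the interior of the polygon P (q assumed off the boundary):
   even-odd (ray crossing) rule *)
Definition in_interior (P : seq point) (q : point) : bool :=
  odd (count (fun i => crosses_ray q (vtx P i) (vtx P i.+1)) (iota 0 (size P))).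

Definition is_hole (S P : seq point) : Prop :=
  simple_polygon P /\ {subset P <= S} /\
  forall q, q \in S -> q \notin P -> ~~ in_interior P q.

Definition balanced_hole (red blue : seq point) (k : nat) (P : seq point) : Prop :=
  [/\ size P = (2 * k)%N, is_hole (red ++ blue) P,
      count (mem red) P = k & count (mem blue) P = k].

End Geometry.

From mathcomp Require Import all_boot all_order all_algebra.
From mathcomp Require Import ring lra zify.
Import Order.TTheory GRing.Theory Num.Theory.
Set Implicit Arguments. Unset Strict Implicit. Unset Printing Implicit Defensive.

(* For k = 1 a red-blue segment is a degenerate balanced 2-hole.  For k >= 2 the
   holes are fans [p; q_1; ...; q_(2k-1)]: the q_i are sorted by angle around the
   apex p and consecutive ones turn counterclockwise around p.  Such a fan is a simple
   polygon covered by the triangles p q_i q_(i+1), so it is a hole as soon as these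
   triangles contain no other point of S.
   If some point p of S lies in a triangle spanned by three others, the remaining
   2n - 1 points leave no angular gap of a half turn around p, so any 2k - 1
   angularly consecutive ones form an empty fan with p.  The number of red points
   changes by at most one from a window to the next and averages
   (2k - 1)(n - [p red]) / (2n - 1), so some window holds exactly k - [p red] of them.
   Otherwise S is in convex position, and any 2k - 1 points of the right colours
   form an empty fan with the lowest point of S. *)

Lemma discrete_ivt (f : nat -> nat) N a b t :
  (forall i, i.+1 < N -> f i.+1 <= (f i).+1 /\ f i <= (f i.+1).+1) ->
  a < N -> b < N -> f a <= t <= f b -> exists2 i, i < N & f i = t.
Proof.
move=> step aN bN.
have walk d c : c + d < N -> (f c <= t <= f (c + d)) || (f (c + d) <= t <= f c) ->
    exists2 i, i < N & f i = t.
  elim: d c => [|d IH] c cd; first by rewrite addn0 => h; exists c; [lia | lia].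
  move=> h; have [e | ne] := eqVneq (f c) t; first by exists c => //; lia.
  have [s1 s2] := step c ltac:(lia).
  by apply: (IH c.+1); [lia | rewrite addSnnS; move: h ne s1 s2; lia].
move=> ht; have [ab | ba] := leqP a b.
  by apply: (walk (b - a) a); rewrite subnKC // ht.
by apply: (walk (a - b) b); rewrite subnKC ?ht ?orbT // ltnW.
Qed.

Lemma nth_rot (T : Type) (x0 : T) (s : seq T) i j : i <= size s -> j < size s ->
  nth x0 (rot i s) j = nth x0 s ((i + j) %% size s).
Proof.
move=> hi hj; rewrite /rot nth_cat size_drop.
have [h | h] := ltnP j (size s - i); first by rewrite nth_drop modn_small //; lia.
have -> : (i + j) %% size s = j - (size s - i).
  have -> : i + j = j - (size s - i) + size s by lia.
  by rewrite modnDr modn_small //; lia.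
by rewrite nth_take; last lia.
Qed.

Section Windows.
Variables (T : Type) (a : pred T).

Lemma count_take_rot1 (s : seq T) m : 0 < m <= size s ->
  count a (take m (rot 1 s)) <= (count a (take m s)).+1 /\
  count a (take m s) <= (count a (take m (rot 1 s))).+1.
Proof.
case: s => [|x s] /=; first lia.
case: m => [//|m] /= ms; rewrite rot1_cons -cats1.
have [hm | hm] := ltnP m (size s).
  rewrite takel_cat; last lia.
  rewrite (take_nth x hm) -cats1 count_cat /=.
  by case: (a x); case: (a (nth x s m)); lia.
rewrite !take_oversize ?size_cat /=; try lia.
by rewrite count_cat /=; case: (a x); lia.
Qed.

Lemma count_take_sum (x0 : T) (s : seq T) m : m <= size s ->
  count a (take m s) = \sum_(j < m) a (nth x0 s j).
Proof.
elim: m => [|m IH] hm; first by rewrite take0 big_ord0.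
rewrite (take_nth x0); last lia.
by rewrite -cats1 count_cat IH ?big_ord_recr /= ?addn0 //; lia.
Qed.

Lemma sum_count_take_rot (x0 : T) (s : seq T) m : m <= size s ->
  \sum_(i < size s) count a (take m (rot i s)) = m * count a s.
Proof.
move=> ms.
have rotE i j : i < size s -> j < size s ->
    nth x0 (rot i s) j = nth x0 s ((i + j) %% size s) by move=> *; rewrite nth_rot //; lia.
transitivity (\sum_(i < size s) \sum_(j < m) (a (nth x0 s ((i + j) %% size s)) : nat)).
  apply: eq_bigr => i _; rewrite (count_take_sum x0) ?size_rot //.
  by apply: eq_bigr => j _; rewrite rotE // (leq_trans (ltn_ord j) ms).
rewrite exchange_big /= -[m in RHS]card_ord -sum_nat_const.
apply: eq_bigr => j _.
have -> : count a s = count a (rot j s).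
  by rewrite /rot count_cat addnC -count_cat cat_take_drop.
rewrite -[rot j s]take_size (count_take_sum x0) size_rot //.
by apply: eq_bigr => i _; rewrite rotE ?(leq_trans (ltn_ord j) ms) // addnC.
Qed.

Lemma exists_window_count (s : seq T) m t : 0 < m <= size s ->
  size s * t.-1 < m * count a s < size s * t.+1 ->
  exists2 i, i < size s & count a (take m (rot i s)) = t.
Proof.
move=> /andP [m0 ms] /andP [lo up].
have [x0 _] : exists x0 : T, True by case: s ms {lo up} => [|x0 ?] /= ms; [lia | exists x0].
pose f i := count a (take m (rot i s)).
(* On average a window holds [m * count a s / size s] items satisfying [a]. *)
have sumE : \sum_(i < size s) f i = m * count a s by apply: (sum_count_take_rot x0).
have [i0 i0s fi0] : exists2 i, i < size s & t <= f i.
  have [/existsP [i hi] | /existsPn small] := boolP [exists i : 'I_(size s), t <= f i].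
    by exists i.
  suff : m * count a s <= size s * t.-1 by rewrite leqNgt lo.
  rewrite -sumE; apply: (@leq_trans (\sum_(i < size s) t.-1)).
    by apply: leq_sum => i _; have := small i; lia.
  by rewrite sum_nat_const card_ord.
have [i1 i1s fi1] : exists2 i, i < size s & f i <= t.
  have [/existsP [i hi] | /existsPn big] := boolP [exists i : 'I_(size s), f i <= t].
    by exists i.
  suff : size s * t.+1 <= m * count a s by rewrite leqNgt up.
  rewrite -sumE; apply: (@leq_trans (\sum_(i < size s) t.+1)).
    by rewrite sum_nat_const card_ord.
  by apply: leq_sum => i _; have := big i; lia.
apply: (discrete_ivt (a := i1) (b := i0)) => //; last by rewrite fi1 fi0.
move=> i hi.
have -> : rot i.+1 s = rot 1 (rot i s) by rewrite -add1n rotD // add1n ltnW.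
apply: count_take_rot1.
by rewrite size_rot m0 ms.
Qed.

End Windows.

Local Open Scope ring_scope.

Section Orientation.
Variable R : realFieldType.
Implicit Types a b c p q x : point R.

Lemma det3_cycle a b c : det3 a b c = det3 b c a.
Proof. by rewrite /det3; ring. Qed.

Lemma det3_swap a b c : det3 a c b = - det3 a b c.
Proof. by rewrite /det3; ring. Qed.

Lemma det3_aab a b : det3 a a b = 0.
Proof. by rewrite /det3; ring. Qed.

Lemma det3_abb a b : det3 a b b = 0.
Proof. by rewrite /det3; ring. Qed.

Lemma det3_aba a b : det3 a b a = 0.
Proof. by rewrite /det3; ring. Qed.

Lemma det3_affine a b u v (t : R) :
  det3 a b (u.1 + t * (v.1 - u.1), u.2 + t * (v.2 - u.2)) =
  (1 - t) * det3 a b u + t * det3 a b v.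
Proof. by rewrite /det3 /=; ring. Qed.

Lemma crosses_rayE q a b : crosses_ray q a b =
  ((q.2 < a.2) != (q.2 < b.2)) && (0 < (b.2 - a.2) * det3 a b q).
Proof.
rewrite /crosses_ray; case: ((q.2 < a.2) != (q.2 < b.2)) / idP => //= straddle.
have dy0 : b.2 - a.2 != 0.
  apply/eqP => dy; move: straddle; have -> : b.2 = a.2 by lra.
  by rewrite eqxx.
rewrite -subr_gt0.
have -> : a.1 + (q.2 - a.2) * (b.1 - a.1) / (b.2 - a.2) - q.1 =
    det3 a b q / (b.2 - a.2) by rewrite /det3; field.
have -> : (b.2 - a.2) * det3 a b q = (b.2 - a.2) ^+ 2 * (det3 a b q / (b.2 - a.2)).
  by field.
have sq_gt0 : 0 < (b.2 - a.2) ^+ 2 by rewrite exprn_even_gt0 ?dy0.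
by rewrite (pmulr_rgt0 _ sq_gt0).
Qed.

Lemma crosses_rayC q a b : crosses_ray q a b = crosses_ray q b a.
Proof.
rewrite !crosses_rayE eq_sym; congr (_ && (0 < _)).
by rewrite /det3; ring.
Qed.

Lemma general_position_det3 (S : seq (point R)) a b c : general_position S ->
  a \in S -> b \in S -> c \in S -> a != b -> b != c -> a != c -> det3 a b c != 0.
Proof. by move=> G aS bS cS ab bc ac; apply/eqP; apply: G. Qed.

Definition in_triangle x a b c : bool :=
  [&& 0 <= det3 a b x, 0 <= det3 b c x & 0 <= det3 c a x].

Lemma odd_crossings_in_triangle q a b c : 0 < det3 a b c ->
  odd (crosses_ray q a b + crosses_ray q b c + crosses_ray q c a) -> in_triangle q a b c.
Proof.
wlog same_ab : a b c / (q.2 < a.2) = (q.2 < b.2).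
  move=> W D odd3.
  have [same | ne_ab] := eqVneq (q.2 < a.2) (q.2 < b.2); first exact: W.
  have [same_bc | ne_bc] := eqVneq (q.2 < b.2) (q.2 < c.2).
    have := W b c a same_bc; rewrite -det3_cycle addnC addnA.
    by move=> /(_ D odd3) /and3P [? ? ?]; apply/and3P.
  have same_ca : (q.2 < c.2) = (q.2 < a.2).
    by move: ne_ab ne_bc; case: (q.2 < a.2); case: (q.2 < b.2); case: (q.2 < c.2).
  have := W c a b same_ca; rewrite det3_cycle -addnA addnC.
  by move=> /(_ D odd3) /and3P [? ? ?]; apply/and3P.
move=> D; rewrite !crosses_rayE same_ab eqxx add0n.
(* [q] is the barycentre of [a], [b], [c] with weights [det3 b c q], [det3 c a q]
   and [det3 a b q]. *)
have bary : det3 b c q * (a.2 - q.2) + det3 c a q * (b.2 - q.2)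
    + det3 a b q * (c.2 - q.2) = 0 by rewrite /det3; ring.
have sum : det3 a b q + det3 b c q + det3 c a q = det3 a b c by rewrite /det3; ring.
have qb := same_ab; rewrite -same_ab.
have [qa | aq] := ltrP q.2 a.2; have [qc | cq] := ltrP q.2 c.2 => //=; move: qb.
- rewrite qa => /esym qb.
  rewrite (@nmulr_rgt0 _ (c.2 - b.2)) ?(@pmulr_rgt0 _ (a.2 - c.2)); try lra.
  by case: ltrP => hx; case: ltrP => hy //= _; apply/and3P; split; nra.
- rewrite ltNge aq => /esym/negbT; rewrite -leNgt => bq.
  rewrite (@pmulr_rgt0 _ (c.2 - b.2)) ?(@nmulr_rgt0 _ (a.2 - c.2)); try lra.
  by case: ltrP => hx; case: ltrP => hy //= _; apply/and3P; split; nra.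
Qed.

End Orientation.

Section Segments.
Variable R : realFieldType.
Implicit Types a b c p x : point R.

Lemma on_segment_det3 x a b : on_segment x a b ->
  exists2 t : R, 0 <= t <= 1 &
    x = (a.1 + t * (b.1 - a.1), a.2 + t * (b.2 - a.2)) /\
    forall c d, det3 c d x = (1 - t) * det3 c d a + t * det3 c d b.
Proof. by case=> t ht ->; exists t => //; split => // c d; apply: det3_affine. Qed.

Lemma on_segment_adjacent a b c x : det3 a b c != 0 ->
  on_segment x a b -> on_segment x b c -> x = b.
Proof.
move=> D /on_segment_det3 [t _ [_ hx]] /on_segment_det3 [s _ [ex hy]].
have := hx a b; rewrite det3_aba det3_abb !mulr0 addr0 => x_ab.
have /eqP := hy a b; rewrite x_ab det3_abb mulr0 add0r eq_sym mulf_eq0 (negbTE D) orbF.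
by move/eqP => s0; rewrite ex s0 !mul0r !addr0 -surjective_pairing.
Qed.

Lemma on_segment_wedge p a b x : 0 < det3 p a b -> on_segment x a b ->
  [/\ x != p, 0 <= det3 p a x & 0 <= det3 p x b].
Proof.
move=> D /on_segment_det3 [t /andP [t0 t1] [_ hx]].
have e1 : det3 p a x = t * det3 p a b by rewrite hx det3_abb mulr0 add0r.
have e2 : det3 p x b = (1 - t) * det3 p a b.
  by rewrite det3_swap hx det3_abb (det3_swap p b a); ring.
split; rewrite ?e1 ?e2; try nra.
by apply/eqP => xp; move: e1 e2; rewrite xp det3_aba det3_aab; nra.
Qed.

End Segments.

Section PseudoAngle.
Variable R : realFieldType.
Implicit Types a b c d p x y : point R.

(* [be x] measures the direction of [x] seen from [p], a half turn being worth 2: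
   [y] lies less than a half turn counterclockwise from [x] exactly when [be]
   increases by less than 2 from [x] to [y]. *)
Definition pseudo_angle (be : point R -> R) p := forall x y, x != p -> y != p ->
  (be x < be y -> ((0 < det3 p x y) = (be y - be x < 2)) /\
                  ((det3 p x y < 0) = (2 < be y - be x))) /\
  (be x = be y -> det3 p x y = 0).

Definition increasing_along (f : point R -> R) x0 (s : seq (point R)) :=
  forall i j, (i < j < size s)%N -> f (nth x0 s i) < f (nth x0 s j).

Definition ccw_around p (s : seq (point R)) :=
  forall j, (j.+1 < size s)%N -> 0 < det3 p (nth p s j) (nth p s j.+1).

Section FanEdges.
Variables (be : point R -> R) (p : point R).
Hypothesis Hbe : pseudo_angle be p.

Lemma pseudo_angle_wedge a b x : a != p -> b != p -> x != p ->
  be a < be b -> 0 < det3 p a b -> 0 <= det3 p a x -> 0 <= det3 p x b ->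
  be a <= be x <= be b.
Proof.
move=> ap bp xp ab D ax xb; have ab2 : be b - be a < 2 by rewrite -((Hbe ap bp).1 ab).1.
apply/andP; split; rewrite leNgt; apply/negP.
- move=> xa; have [xa_ccw _] := (Hbe xp ap).1 xa.
  have [_ xb_cw] := (Hbe xp bp).1 (lt_trans xa ab).
  have : ~~ (0 < det3 p x a) by rewrite det3_swap; lra.
  rewrite xa_ccw -leNgt => ?; suff : det3 p x b < 0 by lra.
  by rewrite xb_cw; lra.
- move=> bx; have [bx_ccw _] := (Hbe bp xp).1 bx.
  have [_ ax_cw] := (Hbe ap xp).1 (lt_trans ab bx).
  have : ~~ (0 < det3 p b x) by rewrite det3_swap; lra.
  rewrite bx_ccw -leNgt => ?; suff : det3 p a x < 0 by lra.
  by rewrite ax_cw; lra.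
Qed.

Lemma fan_edges_disjoint a b c d x : a != p -> b != p -> c != p -> d != p ->
  be a < be b -> 0 < det3 p a b -> be c < be d -> 0 < det3 p c d -> be b < be c ->
  on_segment x a b -> on_segment x c d -> False.
Proof.
move=> ap bp cp dp ab Dab cd Dcd bc /(on_segment_wedge Dab) [xp ax xb].
move=> /(on_segment_wedge Dcd) [_ cx xd].
have /andP [_ xb'] := pseudo_angle_wedge ap bp xp ab Dab ax xb.
have /andP [cx' _] := pseudo_angle_wedge cp dp xp cd Dcd cx xd.
lra.
Qed.

Lemma first_spoke_disjoint a b c d x : a != p -> b != p -> c != p -> d != p ->
  be a < be b -> be b <= be c -> be c < be d -> 0 < det3 p a b -> 0 < det3 p c d ->
  on_segment x p a -> on_segment x c d -> False.
Proof.
move=> ap bp cp dp ab bc cd Dab Dcd s1 /(on_segment_wedge Dcd) [xp cx xd].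
have /andP [cx' _] := pseudo_angle_wedge cp dp xp cd Dcd cx xd.
have [t /andP [t0 t1] [ex hx]] := on_segment_det3 s1.
have t_gt0 : 0 < t.
  rewrite lt_neqAle t0 andbT; apply: contraNneq xp => t_eq0.
  by rewrite ex -t_eq0 !mul0r !addr0 -surjective_pairing.
have xa_col : det3 p a x = 0 by rewrite hx det3_aba det3_abb !mulr0 addr0.
have bx_cw : det3 p b x < 0.
  by rewrite hx det3_aba mulr0 add0r (det3_swap p a b) mulrN oppr_lt0 mulr_gt0.
have [xa_ccw xa_cw] := (Hbe ap xp).1 (lt_le_trans ab (le_trans bc cx')).
have [bx | xb] := ltrP (be b) (be x).
  by move: bx_cw; rewrite ((Hbe bp xp).1 bx).2; move: xa_ccw xa_cw; rewrite xa_col ltxx; lra.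
by have := (Hbe bp xp).2 ltac:(lra); lra.
Qed.

Lemma last_spoke_disjoint r q c d x : r != p -> q != p -> c != p -> d != p ->
  be c < be d -> be d <= be r -> be r < be q -> 0 < det3 p r q -> 0 < det3 p c d ->
  on_segment x q p -> on_segment x c d -> False.
Proof.
move=> rp qp cp dp cd dr rq Drq Dcd s1 /(on_segment_wedge Dcd) [xp cx xd].
have /andP [_ xd'] := pseudo_angle_wedge cp dp xp cd Dcd cx xd.
have [t /andP [t0 t1] [ex hx]] := on_segment_det3 s1.
have t_lt1 : t < 1.
  rewrite lt_neqAle t1 andbT; apply: contraNneq xp => t_eq1.
  by rewrite ex t_eq1 !mul1r [x in (x, _)]addrC [x in (_, x)]addrC !subrK -surjective_pairing.
have xq_col : det3 p q x = 0 by rewrite hx det3_aba det3_abb !mulr0 addr0.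
have rx_ccw : 0 < det3 p r x.
  by rewrite hx det3_aba mulr0 addr0 mulr_gt0 // subr_gt0.
have [xr | rx] := ltrP (be x) (be r).
  have xr_cw : 2 < be r - be x by rewrite -((Hbe xp rp).1 xr).2 det3_swap oppr_lt0.
  have [_ xq_cw] := (Hbe xp qp).1 (lt_trans xr rq).
  by move: xq_cw; rewrite det3_swap xq_col oppr0 ltxx; lra.
by have := (Hbe xp rp).2 ltac:(lra); rewrite det3_swap; lra.
Qed.

End FanEdges.
End PseudoAngle.

Section Polygons.
Variable R : realFieldType.
Implicit Types (a b c p x : point R) (P S : seq (point R)).

Lemma vtx_modn P i : vtx P (i %% size P) = vtx P i.
Proof. by rewrite /vtx modn_mod. Qed.

Lemma vtxS_modn P i : vtx P (i %% size P).+1 = vtx P i.+1.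
Proof. by rewrite /vtx -addn1 modnDml addn1. Qed.

Lemma adjacent_edges_meet S P i x : general_position S -> {subset P <= S} ->
  uniq P -> (3 <= size P)%N ->
  on_segment x (vtx P i) (vtx P i.+1) -> on_segment x (vtx P i.+1) (vtx P i.+2) ->
  x = vtx P i.+1.
Proof.
move=> G PS uP P3; apply: on_segment_adjacent.
have vtxS k : vtx P k \in S by apply/PS/mem_nth; rewrite ltn_pmod //; lia.
have vtx_neq k l : (k %% size P != l %% size P)%N -> vtx P k != vtx P l.
  by move=> kl; rewrite /vtx nth_uniq ?ltn_pmod //; lia.
have modn_small' d : (d < 3)%N -> (d %% size P = d)%N by move=> d3; rewrite modn_small //; lia.
apply: general_position_det3 G (vtxS _) (vtxS _) (vtxS _) _ _ _; apply: vtx_neq.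
- by rewrite -(addn1 i) -{1}(addn0 i) eqn_modDl !modn_small'.
- by rewrite -(addn2 i) -(addn1 i) eqn_modDl !modn_small'.
- by rewrite -(addn2 i) -{1}(addn0 i) eqn_modDl !modn_small'.
Qed.

Section FanPolygon.
Variables (be : point R -> R) (p : point R) (Q S : seq (point R)).
Hypotheses (Q2 : (2 <= size Q)%N) (uniq_pQ : uniq (p :: Q)) (pQS : {subset p :: Q <= S})
  (gpS : general_position S) (Hbe : pseudo_angle be p)
  (be_incr : increasing_along be p Q) (ccw_step : ccw_around p Q).

Let P := p :: Q.

Let nth_neq_apex i : (i < size Q)%N -> nth p Q i != p.
Proof. by move=> im; apply: contraNneq (andP uniq_pQ).1 => <-; rewrite mem_nth. Qed.

Let vtx0 : vtx P 0 = p. Proof. by rewrite /vtx mod0n. Qed.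

Let vtxS i : (i < size Q)%N -> vtx P i.+1 = nth p Q i.
Proof. by move=> im; rewrite /vtx /= modn_small ?ltnS //; apply: set_nth_default. Qed.

Let vtx_last : vtx P (size Q).+1 = p. Proof. by rewrite /vtx /= modnn. Qed.

Let be_nondecr i j : (i <= j < size Q)%N -> be (nth p Q i) <= be (nth p Q j).
Proof.
case/andP; rewrite leq_eqVlt => /orP [/eqP -> //| ij] jm.
by apply/ltW/be_incr; rewrite ij.
Qed.

Lemma fan_nonadjacent_edges_disjoint i j x : (i < j <= size Q)%N -> j != i.+1 ->
  ~~ ((i == 0%N) && (j == size Q)) ->
  on_segment x (vtx P i) (vtx P i.+1) -> ~ on_segment x (vtx P j) (vtx P j.+1).
Proof.
move=> /andP [ij jm] nj nij s1 s2.
have Q_ok k : (k < size Q)%N -> nth p Q k != p by apply: nth_neq_apex.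
case: j ij jm nj nij s2 => [//|j] ij jm nj nij s2.
case: i ij nj nij s1 => [|i] ij nj nij s1.
  have jm' : (j.+1 < size Q)%N by move: nij; rewrite /= => /negP; lia.
  rewrite vtx0 vtxS in s1; last lia.
  rewrite !vtxS in s2; try lia.
  apply: (first_spoke_disjoint Hbe (Q_ok 0 _) (Q_ok 1 _) (Q_ok j _) (Q_ok j.+1 _)
    (be_incr _) (be_nondecr _) (be_incr _) (ccw_step (j := 0) _) (ccw_step _) s1 s2); lia.
rewrite !vtxS in s1; try lia.
have [jm' | jm'] := ltnP j.+1 (size Q).
  rewrite !vtxS in s2; try lia.
  apply: (fan_edges_disjoint Hbe (Q_ok i _) (Q_ok i.+1 _) (Q_ok j _) (Q_ok j.+1 _)
    (be_incr _) (ccw_step _) (be_incr _) (ccw_step _) (be_incr _) s1 s2); lia.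
have ej : j.+2 = (size Q).+1 by lia.
rewrite vtxS // ej vtx_last in s2.
have ccw_last : 0 < det3 p (nth p Q j.-1) (nth p Q j).
  by have := ccw_step (j := j.-1); rewrite prednK; [apply; lia | lia].
apply: (last_spoke_disjoint Hbe (Q_ok j.-1 _) (Q_ok j _) (Q_ok i _) (Q_ok i.+1 _)
  (be_incr _) (be_nondecr _) (be_incr _) ccw_last (ccw_step _) s2 s1); lia.
Qed.

Lemma fan_simple_polygon : simple_polygon P.
Proof.
split => //; right; split=> [/=|i j iP jP ij]; first lia.
have P3 : (3 <= size P)%N by rewrite /=; lia.
case: ifP => [/eqP -> | nj].
  by move=> x; rewrite vtx_modn vtxS_modn => s1 s2; apply: (adjacent_edges_meet gpS pQS).
case: ifP => [/eqP -> | ni] x.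
  by rewrite vtx_modn vtxS_modn => s1 s2; apply: (adjacent_edges_meet gpS pQS).
wlog lt_ij : i j iP jP ij nj ni x / (i < j)%N.
  move=> W; have [/W|ji] := ltnP i j; first exact.
  move=> s1 s2; apply: (W j i) s2 s1; rewrite // 1?eq_sym //.
  by rewrite ltn_neqAle eq_sym ij.
apply: fan_nonadjacent_edges_disjoint; first by rewrite lt_ij; move: jP => /=.
  by rewrite -[i.+1](@modn_small _ (size P)) ?nj //; lia.
by apply/negP => /andP [/eqP i0 /eqP jQ]; move: ni; rewrite i0 jQ modnn.
Qed.

Lemma fan_not_in_interior s0 :
  (forall i, (i.+1 < size Q)%N -> ~~ in_triangle s0 p (nth p Q i) (nth p Q i.+1)) ->
  ~~ in_interior P s0.
Proof.
move=> empty; rewrite /in_interior.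
(* Each triangle [p Q_j Q_(j+1)] is crossed an even number of times, so the edges
   up to [Q_j] cross the ray with the parity of the spoke [p Q_j]. *)
set cr := fun i => crosses_ray s0 (vtx P i) (vtx P i.+1).
have count_iotaS j : count cr (iota 0 j.+1) = (count cr (iota 0 j) + cr j)%N.
  by rewrite -addn1 iotaD count_cat /= addn0.
have spoke j : (j < size Q)%N ->
    odd (count cr (iota 0 j.+1)) = crosses_ray s0 p (nth p Q j).
  elim: j => [|j IH] jQ; first by rewrite /= /cr vtx0 vtxS // addn0; case: crosses_ray.
  rewrite count_iotaS oddD IH 1?ltnW // /cr !vtxS; try lia.
  have := contra (odd_crossings_in_triangle (ccw_step jQ)) (empty j jQ).
  rewrite !oddD !oddb (crosses_rayC s0 _ p).
  by case: crosses_ray; case: crosses_ray; case: crosses_ray.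
have -> : size P = (size Q).+1 by [].
have lastQ : (size Q).-1.+1 = size Q by rewrite prednK //; lia.
rewrite count_iotaS oddD -[in iota 0 (size Q)]lastQ spoke ?lastQ; last lia.
rewrite /cr -[in vtx P (size Q)]lastQ vtxS ?lastQ ?vtx_last; last lia.
by rewrite (crosses_rayC s0 _ p); case: crosses_ray.
Qed.

Lemma fan_is_hole :
  (forall s, s \in S -> s \notin P -> forall i, (i.+1 < size Q)%N ->
     ~~ in_triangle s p (nth p Q i) (nth p Q i.+1)) ->
  is_hole S P.
Proof.
move=> empty; split; first exact: fan_simple_polygon.
by split=> // s sS sP; apply: fan_not_in_interior; apply: empty.
Qed.

End FanPolygon.
End Polygons.

Section DiamondAngle.
Variable R : realFieldType.
Implicit Types X Y : R.

Definition upper X Y : bool := (0 < Y) || ((Y == 0) && (0 < X)).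

Definition diamond_ratio X Y : R := X / (`|X| + `|Y|).

(* A rational substitute for the polar angle of the direction (X, Y): it is
   increasing counterclockwise from 0 (direction (1, 0)) to 4, a half turn adding 2. *)
Definition diamond_angle X Y : R :=
  if upper X Y then 1 - diamond_ratio X Y else 3 + diamond_ratio X Y.

Ltac sign_cases X h := case: (ltrgtP X 0) => h;
  [rewrite ?(ltr0_norm h) ?(lt_gtF h) ?(lt_eqF h)
  | rewrite ?(gtr0_norm h) ?h ?(gt_eqF h)
  | subst X; rewrite ?normr0 ?ltxx ?eqxx].

Lemma normD_gt0 X Y : (X != 0) || (Y != 0) -> 0 < `|X| + `|Y|.
Proof. by case/orP => ?; [apply: ltr_wpDr | apply: ltr_wpDl]; rewrite ?normr_gt0. Qed.

Lemma diamond_ratio_bounds X Y : (X != 0) || (Y != 0) ->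
  (upper X Y -> -1 < diamond_ratio X Y <= 1) /\
  (~~ upper X Y -> -1 <= diamond_ratio X Y < 1).
Proof.
move=> nz; have N_gt0 := normD_gt0 nz.
have tN : diamond_ratio X Y * (`|X| + `|Y|) = X by rewrite /diamond_ratio divfK // gt_eqF.
move: nz N_gt0 tN; rewrite /upper; set t := diamond_ratio X Y.
by sign_cases X hX; sign_cases Y hY => //= _ N0 tN; split => // _; apply/andP; split; nra.
Qed.

Lemma diamond_ratio_upper X1 Y1 X2 Y2 : (X1 != 0) || (Y1 != 0) -> (X2 != 0) || (Y2 != 0) ->
  upper X1 Y1 -> upper X2 Y2 ->
  (0 < X1 * Y2 - Y1 * X2) = (diamond_ratio X2 Y2 < diamond_ratio X1 Y1).
Proof.
move=> nz1 nz2 up1 up2.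
rewrite /diamond_ratio ltr_pdivlMr ?normD_gt0 // mulrAC ltr_pdivrMr ?normD_gt0 //.
move: nz1 nz2 up1 up2 (normD_gt0 nz1) (normD_gt0 nz2); rewrite /upper.
by sign_cases X1 h1; sign_cases Y1 g1 => //= _; sign_cases X2 h2; sign_cases Y2 g2 => //= *;
  apply/idP/idP => ?; nra.
Qed.

Lemma diamond_ratioN X Y : diamond_ratio (- X) (- Y) = - diamond_ratio X Y.
Proof. by rewrite /diamond_ratio !normrN mulNr. Qed.

Lemma upperN X Y : (X != 0) || (Y != 0) -> upper (- X) (- Y) = ~~ upper X Y.
Proof.
rewrite /upper !oppr_gt0 oppr_eq0.
by sign_cases X hX; sign_cases Y hY => //= _; rewrite ?oppr_lt0 ?hX ?(lt_gtF hX) ?ltxx ?lt_gtF.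
Qed.

Lemma diamond_angle_cross X1 Y1 X2 Y2 :
  (X1 != 0) || (Y1 != 0) -> (X2 != 0) || (Y2 != 0) ->
  (diamond_angle X1 Y1 < diamond_angle X2 Y2 ->
     ((0 < X1 * Y2 - Y1 * X2) = (diamond_angle X2 Y2 - diamond_angle X1 Y1 < 2)) /\
     ((X1 * Y2 - Y1 * X2 < 0) = (2 < diamond_angle X2 Y2 - diamond_angle X1 Y1))) /\
  (diamond_angle X1 Y1 = diamond_angle X2 Y2 -> X1 * Y2 - Y1 * X2 = 0).
Proof.
move=> nz1 nz2.
have nzN X Y : (X != 0) || (Y != 0) -> (- X != 0) || (- Y != 0) by rewrite !oppr_eq0.
have [B1 B1'] := diamond_ratio_bounds nz1; have [B2 B2'] := diamond_ratio_bounds nz2.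
have upper_cross X Y X' Y' : (X != 0) || (Y != 0) -> (X' != 0) || (Y' != 0) ->
    upper X Y -> upper X' Y' ->
    ((0 < X * Y' - Y * X') = (diamond_ratio X' Y' < diamond_ratio X Y)) /\
    ((X * Y' - Y * X' < 0) = (diamond_ratio X Y < diamond_ratio X' Y')).
  move=> nz nz' up up'.
  rewrite (diamond_ratio_upper nz nz' up up') -(diamond_ratio_upper nz' nz up' up).
  by split=> //; rewrite -oppr_gt0; congr (0 < _); ring.
rewrite /diamond_angle.
case u1: (upper X1 Y1); case u2: (upper X2 Y2).
- have [E1 E2] := upper_cross _ _ _ _ nz1 nz2 u1 u2.
  have /andP [? ?] := B1 u1; have /andP [? ?] := B2 u2.
  split=> a; first by rewrite E1 E2; split; apply/idP/idP; lra.
  have : ~~ (0 < X1 * Y2 - Y1 * X2) by rewrite E1; lra.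
  have : ~~ (X1 * Y2 - Y1 * X2 < 0) by rewrite E2; lra.
  by rewrite -!leNgt; lra.
- have u2' : upper (- X2) (- Y2) by rewrite upperN // u2.
  have [E1 E2] := upper_cross _ _ _ _ nz1 (nzN _ _ nz2) u1 u2'.
  rewrite diamond_ratioN in E1 E2.
  have /andP [? ?] := B1 u1; have /andP [? ?] := B2' (negbT u2).
  have crossN : X1 * - Y2 - Y1 * - X2 = - (X1 * Y2 - Y1 * X2) by ring.
  rewrite crossN oppr_gt0 oppr_lt0 in E1 E2.
  by split=> a; [rewrite E1 E2; split; apply/idP/idP | ]; lra.
- have /andP [? ?] := B1' (negbT u1); have /andP [? ?] := B2 u2.
  by split => a; lra.
- have u1' : upper (- X1) (- Y1) by rewrite upperN // u1.
  have u2' : upper (- X2) (- Y2) by rewrite upperN // u2.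
  have [E1 E2] := upper_cross _ _ _ _ (nzN _ _ nz1) (nzN _ _ nz2) u1' u2'.
  rewrite !diamond_ratioN in E1 E2.
  have /andP [? ?] := B1' (negbT u1); have /andP [? ?] := B2' (negbT u2).
  have crossNN : - X1 * - Y2 - - Y1 * - X2 = X1 * Y2 - Y1 * X2 by ring.
  rewrite crossNN in E1 E2.
  split=> a; first by rewrite E1 E2; split; apply/idP/idP; lra.
  have : ~~ (0 < X1 * Y2 - Y1 * X2) by rewrite E1; lra.
  have : ~~ (X1 * Y2 - Y1 * X2 < 0) by rewrite E2; lra.
  by rewrite -!leNgt; lra.
Qed.

End DiamondAngle.

Section AngleAt.
Variable R : realFieldType.
Implicit Types a b c p x : point R.

Definition angle_at p x : R := diamond_angle (x.1 - p.1) (x.2 - p.2).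

Lemma sub_neq0 p x : x != p -> (x.1 - p.1 != 0) || (x.2 - p.2 != 0).
Proof.
apply: contraNT; rewrite negb_or !negbK !subr_eq0 => /andP [/eqP e1 /eqP e2].
by rewrite [x]surjective_pairing e1 e2 -surjective_pairing.
Qed.

Lemma angle_at_pseudo_angle p : pseudo_angle (angle_at p) p.
Proof. by move=> x y xp yp; apply: (diamond_angle_cross (sub_neq0 xp) (sub_neq0 yp)). Qed.

Lemma angle_at_range p x : x != p -> 0 <= angle_at p x < 4.
Proof.
move=> xp; have [B B'] := diamond_ratio_bounds (sub_neq0 xp).
rewrite /angle_at /diamond_angle; case: ifP => [/B | /negbT/B'] /andP [? ?].
  by apply/andP; split; lra.
by apply/andP; split; lra.
Qed.

Definition above p x := upper (x.1 - p.1) (x.2 - p.2).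

Lemma angle_at_above p x : x != p -> above p x -> angle_at p x < 2.
Proof.
move=> xp up; have /andP [? ?] := (diamond_ratio_bounds (sub_neq0 xp)).1 up.
by rewrite /angle_at /diamond_angle -/(above p x) up; lra.
Qed.

End AngleAt.

Section ShiftAngle.
Variable R : realFieldType.
Implicit Types p x : point R.

Definition shift_angle (be : point R -> R) (c0 : R) x : R :=
  if 0 <= be x - c0 then be x - c0 else be x - c0 + 4.

Variables (be : point R -> R) (p : point R) (c0 : R).
Hypotheses (Hbe : pseudo_angle be p) (be_range : forall x, x != p -> 0 <= be x < 4)
  (c0_range : 0 <= c0 < 4).

Lemma shift_angle_range x : x != p -> 0 <= shift_angle be c0 x < 4.
Proof.
move=> /be_range /andP [? ?]; have /andP [? ?] := c0_range.
by rewrite /shift_angle; case: (lerP 0 (be x - c0)) => ?; apply/andP; split; lra.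
Qed.

Lemma shift_angle_pseudo_angle : pseudo_angle (shift_angle be c0) p.
Proof.
move=> x y xp yp; have /andP [? ?] := c0_range.
have /andP [? ?] := be_range xp; have /andP [? ?] := be_range yp.
have [lt_xy eq_xy] := Hbe xp yp; rewrite /shift_angle.
case: (lerP 0 (be x - c0)) => hx; case: (lerP 0 (be y - c0)) => hy.
- split=> [a | e]; last by apply: eq_xy; lra.
  have [-> ->] := lt_xy ltac:(lra).
  by split; congr (_ < _); ring.
- split=> [_ | e]; last lra.
  have [lt_yx | lt_xy' | e] := ltrgtP (be y) (be x); try lra.
  have [ccw cw] := ((Hbe yp xp).1 lt_yx).
  by rewrite det3_swap oppr_gt0 oppr_lt0 ccw cw; split; apply/idP/idP; lra.
- by split=> [a | e]; lra.
- split=> [a | e]; last by apply: eq_xy; lra.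
  have [-> ->] := lt_xy ltac:(lra).
  by split; congr (_ < _); ring.
Qed.

End ShiftAngle.

Lemma interior_point_no_half_turn (R : realFieldType) (be : point R -> R) p a b c :
  pseudo_angle be p -> a != p -> b != p -> c != p ->
  0 < det3 p a b -> 0 < det3 p b c -> 0 < det3 p c a ->
  0 <= be a <= 2 -> 0 <= be b <= 2 -> 0 <= be c <= 2 -> False.
Proof.
move=> Hbe ap bp cp Dab Dbc Dca a02 b02 c02.
have ccw_lt u v : u != p -> v != p -> 0 < det3 p u v ->
    0 <= be u <= 2 -> 0 <= be v <= 2 -> be u < be v.
  move=> up vp D /andP [? ?] /andP [? ?].
  have [// | vu | e] := ltrgtP (be u) (be v).
    by have := ((Hbe v u vp up).1 vu).2; rewrite det3_swap oppr_lt0 D => /esym; lra.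
  by have := (Hbe u v up vp).2 e; lra.
have := ccw_lt _ _ ap bp Dab a02 b02; have := ccw_lt _ _ bp cp Dbc b02 c02.
have := ccw_lt _ _ cp ap Dca c02 a02; lra.
Qed.

Section AngularSort.
Variable R : realFieldType.
Implicit Types (p x y z : point R) (S Z : seq (point R)).

Definition angle_sort p Z := sort (fun x y => angle_at p x <= angle_at p y) Z.

Lemma angle_sort_incr S Z p : general_position S -> {subset Z <= S} ->
  p \in S -> p \notin Z -> uniq Z -> increasing_along (angle_at p) p (angle_sort p Z).
Proof.
move=> gpS ZS pS pZ uZ i j /andP [ij js]; set Q := angle_sort p Z in js *.
have Q_sorted : sorted (fun x y => angle_at p x <= angle_at p y) Q.
  by apply: sort_sorted => x y; apply: le_total.
have iQ : (i < size Q)%N by apply: ltn_trans ij js.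
have memQ k : (k < size Q)%N -> nth p Q k \in Z by move=> kQ; rewrite -(mem_sort (fun x y => angle_at p x <= angle_at p y) Z) mem_nth.
have neq_p k : (k < size Q)%N -> nth p Q k != p by move=> /memQ; apply: contraTneq => ->.
have le_tr : transitive (fun x y => angle_at p x <= angle_at p y).
  by move=> y x z; apply: le_trans.
rewrite lt_neqAle (sorted_ltn_nth le_tr p Q_sorted) ?inE ?ij ?andbT //.
have ne_ij : nth p Q i != nth p Q j by rewrite nth_uniq ?sort_uniq // neq_ltn ij.
apply: (contra_neq (angle_at_pseudo_angle (neq_p i iQ) (neq_p j js)).2).
by apply: (general_position_det3 gpS pS (ZS _ (memQ i iQ)) (ZS _ (memQ j js)));
  rewrite // eq_sym neq_p.
Qed.

Lemma above_trans x y z : above x y -> above y z -> above x z.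
Proof.
rewrite /above /upper => /orP [h1 | /andP [/eqP h1 h2]] /orP [g1 | /andP [/eqP g1 g2]];
  apply/orP; first [left; lra | right; apply/andP; split; [apply/eqP; lra | lra]].
Qed.

Lemma above_total x y : x != y -> ~~ above x y -> above y x.
Proof.
move=> xy; rewrite /above /upper negb_or negb_and -!leNgt => /andP [h1 h2].
apply/orP; have [e | e | e] := ltrgtP x.2 y.2; [lra | by left; lra |].
right; rewrite e subrr eqxx /=; move: h2; rewrite e subrr eqxx /= => h2.
have [f | f | f] := ltrgtP x.1 y.1; try lra.
by move: xy; rewrite [x]surjective_pairing [y]surjective_pairing e f eqxx.
Qed.

Lemma exists_lowest_point S : S != [::] ->
  exists2 p, p \in S & forall x, x \in S -> x != p -> above p x.
Proof.
elim: S => [//|a [|b s] IH] _.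
  by exists a; rewrite ?mem_head // => x; rewrite inE => /eqP ->; rewrite eqxx.
have [q qs q_low] := IH isT.
have [aq | naq] := boolP (above a q).
  exists a; rewrite ?mem_head // => x; rewrite in_cons => /orP [/eqP -> | xs].
    by rewrite eqxx.
  by move=> _; have [-> // | xq] := eqVneq x q; apply: above_trans aq (q_low x xs xq).
exists q; first by rewrite in_cons qs orbT.
move=> x; rewrite in_cons => /orP [/eqP -> aq | xs xq]; last exact: q_low.
exact: above_total aq naq.
Qed.

End AngularSort.

Section IncreasingSeq.
Variables (R : realFieldType) (f : point R -> R) (x0 : point R) (s : seq (point R)).
Hypothesis f_incr : increasing_along f x0 s.

Lemma nth_between j l : (j.+1 < size s)%N -> (l < size s)%N ->
  f (nth x0 s j) <= f (nth x0 s l) <= f (nth x0 s j.+1) -> l = j \/ l = j.+1.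
Proof.
move=> js ls /andP [jl lj]; have [lt_lj | lt_jl | ->] := ltngtP l j; [| | by left].
  by exfalso; have := f_incr (i := l) (j := j) ltac:(lia); lra.
have [lt_lj1 | lt_j1l | ->] := ltngtP l j.+1; [lia | | by right].
by exfalso; have := f_incr (i := j.+1) (j := l) ltac:(lia); lra.
Qed.

Hypothesis f_range : forall l, (l < size s)%N -> 0 <= f (nth x0 s l) < 4.

Let f_nondecr i j : (i <= j < size s)%N -> f (nth x0 s i) <= f (nth x0 s j).
Proof.
case/andP; rewrite leq_eqVlt => /orP [/eqP -> //| ij] js.
by apply/ltW/f_incr; rewrite ij.
Qed.

Lemma shift_angle_after_gap j l : (j.+1 < size s)%N -> (l < size s)%N ->
  2 <= f (nth x0 s j.+1) - f (nth x0 s j) ->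
  0 <= shift_angle f (f (nth x0 s j.+1)) (nth x0 s l) <= 2.
Proof.
move=> js ls gap; rewrite /shift_angle.
have /andP [? ?] := f_range (ltnW js); have /andP [? ?] := f_range js.
have /andP [? ?] := f_range ls.
have [lj | jl] := leqP l j.
  have := f_nondecr (i := l) (j := j) ltac:(lia).
  by case: (lerP 0 (f (nth x0 s l) - f (nth x0 s j.+1))) => ? ?; apply/andP; split; lra.
have := f_nondecr (i := j.+1) (j := l) ltac:(lia).
by case: (lerP 0 (f (nth x0 s l) - f (nth x0 s j.+1))) => ? ?; apply/andP; split; lra.
Qed.

Lemma rot_shift_angle_incr i : (i < size s)%N ->
  increasing_along (shift_angle f (f (nth x0 s i))) x0 (rot i s).
Proof.
move=> iS j1 j2; rewrite size_rot => /andP [j12 j2s].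
set c := f (nth x0 s i).
have shiftE l : (l < size s)%N -> shift_angle f c (nth x0 s l) =
    if (i <= l)%N then f (nth x0 s l) - c else f (nth x0 s l) - c + 4.
  move=> ls; rewrite /shift_angle; have [il | li] := leqP i l.
    by rewrite subr_ge0 f_nondecr ?il.
  by rewrite subr_ge0 leNgt f_incr ?li.
have rot_lt j : (i + j < size s)%N -> nth x0 (rot i s) j = nth x0 s (i + j).
  by move=> ijs; rewrite nth_rot ?modn_small ?(ltnW iS) //; lia.
have rot_ge j : (j < size s)%N -> (size s <= i + j)%N ->
    nth x0 (rot i s) j = nth x0 s (i + j - size s).
  move=> js sij; rewrite nth_rot ?(ltnW iS) //.
  by rewrite -{1}(subnK sij) modnDr modn_small //; lia.
have not_il j : (j < size s)%N -> (size s <= i + j)%N -> (i <= i + j - size s)%N = false.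
  by move=> js sij; apply/negbTE; lia.
have [h2 | h2] := ltnP (i + j2) (size s).
  rewrite !rot_lt ?shiftE ?leq_addr //; try lia.
  by have := f_incr (i := (i + j1)%N) (j := (i + j2)%N) ltac:(lia); lra.
have [h1 | h1] := ltnP (i + j1) (size s).
  rewrite rot_lt ?rot_ge ?shiftE ?leq_addr ?not_il //; try lia.
  have /andP [? ?] := f_range (l := i + j1) h1.
  by have /andP [? ?] := f_range (l := i + j2 - size s) ltac:(lia); lra.
rewrite !rot_ge ?shiftE ?not_il //; try lia.
by have := f_incr (i := (i + j1 - size s)%N) (j := (i + j2 - size s)%N) ltac:(lia); lra.
Qed.
End IncreasingSeq.

Lemma sorted_wedge_empty (R : realFieldType) (be : point R -> R) p (L : seq (point R)) s j :
  pseudo_angle be p -> p \notin L -> increasing_along be p L ->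
  (j.+1 < size L)%N -> 0 < det3 p (nth p L j) (nth p L j.+1) ->
  s \in L -> in_triangle s p (nth p L j) (nth p L j.+1) ->
  s = nth p L j \/ s = nth p L j.+1.
Proof.
move=> Hbe pL be_incr jL ccw sL /and3P [ps _ sp].
have neq_p k : (k < size L)%N -> nth p L k != p by move=> kL; apply: contraNneq pL => <-; rewrite mem_nth.
have lt_j : be (nth p L j) < be (nth p L j.+1) by apply: be_incr; rewrite ltnSn.
rewrite det3_cycle in sp; rewrite -(nth_index p sL) in ps sp *.
have sL' : (index s L < size L)%N by rewrite index_mem.
have := pseudo_angle_wedge Hbe (neq_p _ (ltnW jL)) (neq_p _ jL) (neq_p _ sL') lt_j ccw ps sp.
by move/(nth_between be_incr jL sL') => [] ->; [left | right].
Qed.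

Lemma sorted_prefix_hole (R : realFieldType) (S L : seq (point R)) (be : point R -> R) p m :
  general_position S -> pseudo_angle be p -> uniq L ->
  (forall x, (x \in L) = (x != p) && (x \in S)) ->
  increasing_along be p L -> ccw_around p L -> p \in S -> (2 <= m <= size L)%N -> is_hole S (p :: take m L).
Proof.
move=> gpS Hbe uniqL memL L_incr ccw pS /andP [m2 mL].
have pL : p \notin L by rewrite memL eqxx.
set Q := take m L.
have QL : (size Q <= size L)%N by rewrite size_take_min geq_minr.
have nthQ j : (j < size Q)%N -> nth p Q j = nth p L j.
  by rewrite size_takel // => jQ; rewrite nth_take.
have uniqQ : uniq (p :: Q).
  by rewrite /= (contra (@mem_take _ _ _ p)) // take_uniq.
have QS : {subset p :: Q <= S}.
  by move=> x; rewrite inE => /orP [/eqP -> // | /mem_take]; rewrite memL => /andP [].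
have Q_incr : increasing_along be p Q.
  by move=> j1 j2 /andP [j12 j2Q]; rewrite !nthQ ?(ltn_trans j12) // L_incr // j12 (leq_trans j2Q).
have Q_ccw : ccw_around p Q.
  by move=> j jQ; rewrite !nthQ ?(ltnW jQ) //; apply: ccw; apply: leq_trans jQ QL.
apply: (fan_is_hole _ uniqQ QS gpS Hbe Q_incr Q_ccw); first by rewrite size_takel.
move=> x xS; rewrite inE negb_or => /andP [xp xQ] j jQ; apply/negP => x_in.
have jL : (j.+1 < size L)%N by apply: leq_trans QL.
rewrite !nthQ ?(ltnW jQ) // in x_in.
have xL : x \in L by rewrite memL xp.
have [] := sorted_wedge_empty Hbe pL L_incr jL (ccw _ jL) xL x_in => ex;
  by move: xQ; rewrite ex -nthQ ?(ltnW jQ) // mem_nth ?(ltnW jQ).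
Qed.

Section InteriorPoint.
Variables (R : realFieldType) (S : seq (point R)) (p a b c : point R).
Hypotheses (gpS : general_position S) (uniqS : uniq S)
  (pS : p \in S) (aS : a \in S) (bS : b \in S) (cS : c \in S)
  (p_vertex : p \notin [:: a; b; c]) (abc_ccw : 0 < det3 a b c)
  (p_in_abc : in_triangle p a b c).

Lemma interior_point_ccw : [/\ 0 < det3 p a b, 0 < det3 p b c & 0 < det3 p c a].
Proof.
move: p_vertex; rewrite !in_cons in_nil orbF !negb_or => /and3P [pa pb pc].
have [ab bc ca] : [/\ a != b, b != c & c != a].
  by split; apply: contraTneq abc_ccw => ->; rewrite ?det3_aab ?det3_abb ?det3_aba ltxx.
have gp_pos u v : u \in S -> v \in S -> u != v -> p != u -> p != v ->
    0 <= det3 u v p -> 0 < det3 p u v.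
  move=> uS vS uv pu pv h; rewrite det3_cycle lt_neqAle h andbT eq_sym.
  by apply: general_position_det3 gpS uS vS pS uv _ _; rewrite // eq_sym.
case/and3P: p_in_abc => ??? ; split; apply: gp_pos; rewrite // eq_sym //.
Qed.

Lemma surrounded_sorted_ccw (be : point R -> R) (L : seq (point R)) :
  pseudo_angle be p -> (forall x, x != p -> 0 <= be x < 4) ->
  increasing_along be p L -> p \notin L -> a \in L -> b \in L -> c \in L -> ccw_around p L.
Proof.
move=> Hbe be_range be_incr pL aL bL cL j jL.
have neq_p x : x \in L -> x != p by apply: contraTneq => ->.
have nthL k : (k < size L)%N -> nth p L k \in L by apply: mem_nth.
have lt_j : be (nth p L j) < be (nth p L j.+1) by apply: be_incr; rewrite ltnSn.
rewrite ((Hbe _ _ (neq_p _ (nthL _ (ltnW jL))) (neq_p _ (nthL _ jL))).1 lt_j).1.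
(* A gap of a half turn would leave [a], [b], [c] in a closed half-plane bounded
   by a line through [p]. *)
rewrite ltNge; apply/negP => gap.
have ga_pa := shift_angle_pseudo_angle Hbe be_range (be_range _ (neq_p _ (nthL _ jL))).
have half x : x \in L -> 0 <= shift_angle be (be (nth p L j.+1)) x <= 2.
  move=> xL; rewrite -(nth_index p xL); apply: shift_angle_after_gap => //.
    by move=> l lL; apply/be_range/neq_p/nthL.
  by rewrite index_mem.
have [Dab Dbc Dca] := interior_point_ccw.
exact: (interior_point_no_half_turn ga_pa (neq_p _ aL) (neq_p _ bL) (neq_p _ cL) Dab Dbc Dca
  (half _ aL) (half _ bL) (half _ cL)).
Qed.

Lemma interior_window_hole i m : let L := angle_sort p (rem p S) in
  (i < size L)%N -> (2 <= m <= size L)%N -> is_hole S (p :: take m (rot i L)).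
Proof.
move=> L iL m_range.
have memL x : (x \in L) = (x != p) && (x \in S) by rewrite mem_sort mem_rem_uniq.
have pL : p \notin L by rewrite memL eqxx.
have L_incr := angle_sort_incr gpS (mem_subseq (rem_subseq p S)) pS
  (negbT (mem_rem_uniqF p uniqS)) (rem_uniq p uniqS).
have L_range l : (l < size L)%N -> 0 <= angle_at p (nth p L l) < 4.
  by move=> lL; apply: angle_at_range; apply: contraNneq pL => <-; rewrite mem_nth.
have be_pa := shift_angle_pseudo_angle (@angle_at_pseudo_angle _ p) (@angle_at_range _ p)
  (L_range i iL).
have be_range := shift_angle_range (@angle_at_range _ p) (L_range i iL).
set be := shift_angle _ _ in be_pa be_range.
have memL' x : (x \in rot i L) = (x != p) && (x \in S) by rewrite mem_rot memL.
have L'_incr : increasing_along be p (rot i L) by apply: rot_shift_angle_incr.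
have pL' : p \notin rot i L by rewrite memL' eqxx.
move: p_vertex; rewrite !in_cons in_nil orbF !negb_or => /and3P [pa pb pc].
have ccw := surrounded_sorted_ccw be_pa be_range L'_incr pL'
  ltac:(by rewrite memL' eq_sym pa) ltac:(by rewrite memL' eq_sym pb)
  ltac:(by rewrite memL' eq_sym pc).
apply: (sorted_prefix_hole gpS be_pa _ memL' L'_incr ccw); rewrite ?size_rot //.
by rewrite rot_uniq sort_uniq rem_uniq.
Qed.

End InteriorPoint.

Definition convex_position (R : realFieldType) (S : seq (point R)) :=
  forall s a b c, s \in S -> a \in S -> b \in S -> c \in S ->
    s \notin [:: a; b; c] -> 0 < det3 a b c -> ~~ in_triangle s a b c.

Lemma lowest_fan_hole (R : realFieldType) (S Z : seq (point R)) p :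
  general_position S -> convex_position S -> p \in S ->
  (forall x, x \in S -> x != p -> above p x) ->
  {subset Z <= S} -> p \notin Z -> uniq Z -> (2 <= size Z)%N ->
  is_hole S (p :: angle_sort p Z).
Proof.
move=> gpS convS pS p_low ZS pZ uniqZ Z2; set Q := angle_sort p Z.
have memQ x : (x \in Q) = (x \in Z) by rewrite mem_sort.
have Q_incr := angle_sort_incr gpS ZS pS pZ uniqZ; rewrite -/Q in Q_incr.
have QZ j : (j < size Q)%N -> nth p Q j \in Z by move=> jQ; rewrite -memQ mem_nth.
have neq_p j : (j < size Q)%N -> nth p Q j != p by move=> /QZ; apply: contraTneq => ->.
have Q_ccw : ccw_around p Q.
  move=> j jQ; have xp := neq_p _ (ltnW jQ); have yp := neq_p _ jQ.
  have lt_j : angle_at p (nth p Q j) < angle_at p (nth p Q j.+1).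
    by apply: Q_incr; rewrite ltnSn.
  rewrite ((angle_at_pseudo_angle xp yp).1 lt_j).1.
  have := angle_at_above yp (p_low _ (ZS _ (QZ _ jQ)) yp).
  by have /andP [? _] := angle_at_range xp; move=> ?; lra.
have uniqQ : uniq (p :: Q) by rewrite /= memQ pZ sort_uniq.
have QS : {subset p :: Q <= S} by move=> x; rewrite inE memQ => /orP [/eqP -> | /ZS].
apply: (fan_is_hole _ uniqQ QS gpS (@angle_at_pseudo_angle _ p) Q_incr Q_ccw).
  by rewrite size_sort.
move=> s sS; rewrite inE negb_or => /andP [sp sQ] j jQ.
apply: (convS _ _ _ _ sS pS (ZS _ (QZ _ (ltnW jQ))) (ZS _ (QZ _ jQ)) _ (Q_ccw _ jQ)).
rewrite !in_cons in_nil orbF (negbTE sp) /=.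
by apply/norP; split; apply: contraNneq sQ => ->; rewrite mem_nth // ltnW.
Qed.

Lemma interior_point_or_convex (R : realFieldType) (S : seq (point R)) :
  (exists s a b c, [/\ s \in S, a \in S, b \in S, c \in S &
     [&& s \notin [:: a; b; c], 0 < det3 a b c & in_triangle s a b c]]) \/
  convex_position S.
Proof.
pose inside (s a b c : point R) := [&& s \notin [:: a; b; c], 0 < det3 a b c & in_triangle s a b c].
have [/hasP [s sS /hasP [a aS /hasP [b bS /hasP [c cS sabc]]]] | none] :=
  boolP (has (fun s => has (fun a => has (fun b => has (inside s a b) S) S) S) S).
  by left; exists s, a, b, c.
right=> s a b c sS aS bS cS sabc abc; apply/negP => s_in.
move/hasPn: none => /(_ s sS) /hasPn /(_ a aS) /hasPn /(_ b bS) /hasPn /(_ c cS).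
by rewrite /inside sabc abc s_in.
Qed.

Lemma count_colors (R : realFieldType) (red blue s : seq (point R)) :
  {subset s <= red ++ blue} -> (forall x, x \in red -> x \notin blue) ->
  (count (mem red) s + count (mem blue) s = size s)%N.
Proof.
move=> sub disj; rewrite -count_predUI addnC.
have -> : count (predI (mem red) (mem blue)) s = 0%N.
  by apply/eqP; rewrite -leqn0 leqNgt -has_count; apply/hasPn => x _; apply/andP => -[/disj/negP].
by rewrite add0n; apply/eqP; rewrite -all_count; apply/allP => x /sub; rewrite mem_cat.
Qed.

Lemma window_count_bounds n k (r : bool) : (1 < k)%N -> (k <= n)%N ->
  ((2 * n - 1) * (k - r).-1 < (2 * k - 1) * (n - r) < (2 * n - 1) * (k - r).+1)%N.
Proof.
move=> k2 kn; have [k' ek] : exists k', k = k'.+2 by exists k.-2; lia.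
have [d en] : exists d, n = (k'.+2 + d)%N by exists (n - k'.+2)%N; lia.
subst k n.
have -> : (2 * (k'.+2 + d) - 1 = 2 * k' + 2 * d + 3)%N by lia.
have -> : (2 * k'.+2 - 1 = 2 * k' + 3)%N by lia.
by case: r; rewrite ?subn0 ?subn1 /=; apply/andP; split; nia.
Qed.

Section BalancedHoles.
Variables (R : realFieldType) (n k : nat) (red blue : seq (point R)).
Hypotheses (k_gt0 : (0 < k)%N) (k_le_n : (k <= n)%N)
  (uniq_red : uniq red) (uniq_blue : uniq blue)
  (size_red : size red = n) (size_blue : size blue = n)
  (disj : forall x, x \in red -> x \notin blue) (gpS : general_position (red ++ blue)).

Let S := red ++ blue.

Let uniqS : uniq S.
Proof.
rewrite cat_uniq uniq_red uniq_blue andbT /=.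
by apply/hasPn => x xb; apply: contraTN xb; apply: disj.
Qed.

Let one_color p : p \in S -> ((p \in red) + (p \in blue) = 1)%N.
Proof.
rewrite mem_cat; case: (boolP (p \in red)) => [/disj/negbTE -> // | _ /= ->].
by rewrite addn1.
Qed.

Lemma balanced_2hole r b : r \in red -> b \in blue -> balanced_hole red blue 1 [:: r; b].
Proof.
move=> rr bb; have rb : r != b by apply: contraTneq bb => <-; apply: disj.
have br : b \notin red by apply: contraTN bb => /disj.
split=> //; last by rewrite /= bb (negbTE (disj rr)).
- split; first by split; [rewrite /= inE rb | left].
  split; first by move=> x; rewrite !inE mem_cat => /orP [] /eqP ->; rewrite ?rr ?bb ?orbT.
  by move=> q _ _; rewrite /in_interior /vtx /= (crosses_rayC q b r); case: crosses_ray.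
- by rewrite /= rr (negbTE br).
Qed.

Lemma fan_balanced_hole p Q : p \in S -> {subset Q <= S} -> size Q = (2 * k - 1)%N ->
  count (mem red) Q = (k - (p \in red))%N -> is_hole S (p :: Q) ->
  balanced_hole red blue k (p :: Q).
Proof.
move=> pS QS sizeQ redQ hole; have pc := one_color pS.
have := count_colors QS disj; rewrite redQ sizeQ => blueQ.
split=> //=; first by rewrite sizeQ; clear -k_gt0; lia.
  by rewrite redQ; case: (p \in red) pc => /=; clear -k_gt0; lia.
by case: (p \in red) (p \in blue) pc blueQ => [] [] /=; clear -k_gt0; lia.
Qed.

Let size_S : size S = (2 * n)%N.
Proof. by rewrite size_cat size_red size_blue; lia. Qed.

Let red_not_blue x : x \in blue -> x \notin red.
Proof. by apply: contraTN; apply: disj. Qed.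

Let count_red_S : count (mem red) S = n.
Proof.
rewrite count_cat -size_red; have /eqP -> : count (mem red) red == size red.
  by rewrite -all_count; apply/allP.
by rewrite (eq_in_count (a2 := pred0)) ?count_pred0 ?addn0 // => x /red_not_blue /negbTE.
Qed.

Lemma balanced_hole_interior_point p a b c : (1 < k)%N ->
  p \in S -> a \in S -> b \in S -> c \in S -> p \notin [:: a; b; c] ->
  0 < det3 a b c -> in_triangle p a b c -> exists P, balanced_hole red blue k P.
Proof.
move=> k2 pS aS bS cS p_vertex abc_ccw p_in.
have m_range : (2 <= 2 * k - 1 <= 2 * n - 1)%N by clear -k2 k_le_n; lia.
set L := angle_sort p (rem p S).
have sizeL : size L = (2 * n - 1)%N by rewrite size_sort size_rem // size_S subn1.
have redL : count (mem red) L = (n - (p \in red))%N.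
  by rewrite count_sort count_rem count_red_S pS.
have [i iL redW] : exists2 i, (i < size L)%N &
    count (mem red) (take (2 * k - 1) (rot i L)) = (k - (p \in red))%N.
  apply: exists_window_count; rewrite sizeL ?redL ?window_count_bounds //.
  by case/andP: m_range => /ltnW ->.
exists (p :: take (2 * k - 1) (rot i L)); apply: fan_balanced_hole => //.
- by move=> x /mem_take; rewrite mem_rot mem_sort => /mem_rem.
- by rewrite size_takel ?size_rot ?sizeL //; case/andP: m_range.
- apply: (interior_window_hole gpS uniqS pS aS bS cS p_vertex abc_ccw p_in iL).
  by rewrite sizeL.
Qed.

Lemma balanced_hole_convex_position : (1 < k)%N -> convex_position S ->
  exists P, balanced_hole red blue k P.
Proof.
move=> k2 convS.
have [p pS p_low] : exists2 p, p \in S & forall x, x \in S -> x != p -> above p x.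
  by apply: exists_lowest_point; rewrite -size_eq0 size_S; clear -k2 k_le_n; lia.
have size_rem_p s : size (rem p s) = (size s - (p \in s))%N.
  by have [ps | /rem_id ->] := boolP (p \in s); rewrite ?size_rem ?subn1 ?subn0.
set r := (k - (p \in red))%N; set b := (k - (p \in blue))%N.
have [rn bn rb] : [/\ r <= n - (p \in red), b <= n - (p \in blue) & r + b = 2 * k - 1]%N.
  move: (one_color pS); rewrite /r /b.
  by case: (p \in red) (p \in blue) => [] [] /= pc; split; clear -pc k2 k_le_n; lia.
set Z := take r (rem p red) ++ take b (rem p blue).
have redZ : count (mem red) Z = r.
  have /eqP red_r : count (mem red) (take r (rem p red)) == size (take r (rem p red)).
    by rewrite -all_count; apply/allP => x /mem_take /mem_rem.
  have /eqP red_b : count (mem red) (take b (rem p blue)) == 0%N.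
    by rewrite -leqn0 leqNgt -has_count; apply/hasPn => x /mem_take /mem_rem /red_not_blue.
  by rewrite count_cat red_r red_b addn0 size_takel // size_rem_p size_red.
have ZS : {subset Z <= S}.
  by move=> x; rewrite !mem_cat => /orP [] /mem_take /mem_rem ->; rewrite ?orbT.
have pZ : p \notin Z.
  by rewrite mem_cat; apply/norP; split; apply/negP => /mem_take; rewrite mem_rem_uniq // inE eqxx.
have uniqZ : uniq Z.
  rewrite cat_uniq !take_uniq ?rem_uniq //= andbT.
  by apply/hasPn => x /mem_take /mem_rem /red_not_blue; apply: contra => /mem_take /mem_rem.
have sizeZ : size Z = (2 * k - 1)%N.
  by rewrite size_cat !size_takel ?size_rem_p ?size_red ?size_blue.
exists (p :: angle_sort p Z); apply: fan_balanced_hole => //.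
- by move=> x; rewrite mem_sort => /ZS.
- by rewrite size_sort.
- by rewrite count_sort redZ.
apply: lowest_fan_hole => //; rewrite sizeZ; clear -k2; lia.
Qed.

End BalancedHoles.

Theorem proposition2 (R : realFieldType) (n k : nat) (red blue : seq (point R)) :
  (1 <= n)%N -> (1 <= k <= n)%N ->
  uniq red -> uniq blue -> size red = n -> size blue = n ->
  (forall x, x \in red -> x \notin blue) ->
  general_position (red ++ blue) ->
  exists P : seq (point R), balanced_hole red blue k P.
Proof.
move=> n_gt0 /andP [k_gt0 k_le_n] uniq_red uniq_blue size_red size_blue disj gpS.
have [k_gt1 | k_le1] := ltnP 1 k.
  have [[s [a [b [c [sS aS bS cS /and3P [s_vertex abc_ccw s_in]]]]]] | convS] :=
    interior_point_or_convex (red ++ blue).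
    exact: (balanced_hole_interior_point k_gt0 k_le_n uniq_red uniq_blue size_red size_blue
      disj gpS k_gt1 sS aS bS cS s_vertex abc_ccw s_in).
  exact: (balanced_hole_convex_position k_gt0 k_le_n uniq_red uniq_blue size_red size_blue
    disj gpS k_gt1 convS).
have -> : k = 1%N by apply/eqP; rewrite eqn_leq k_le1.
have r_red : nth (0, 0) red 0 \in red by rewrite mem_nth // size_red.
have b_blue : nth (0, 0) blue 0 \in blue by rewrite mem_nth // size_blue.
by exists [:: nth (0, 0) red 0; nth (0, 0) blue 0]; apply: balanced_2hole.
Qed.
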